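(* Let $G$ be a Lie group, $H\subseteq G$ a closed subgroup, and $\mathfrak{g}=\mathfrak{h}\oplus\mathfrak{m}$ a reductive decomposition. Equip $G/H$ with a $G$-invariant Riemannian metric (an $\mathrm{Ad}(H)$-invariant inner product $\langle\cdot,\cdot\rangle$ on $\mathfrak{m}$). Suppose $A$ is a $G$-invariant Codazzi tensor field on $G/H$, with $\langle\cdot,\cdot\rangle$-orthogonal eigenspace decomposition $\mathfrak{m}=\mathfrak{m}_1\oplus\cdots\oplus\mathfrak{m}_r$ on $\mathfrak{m}$, where $\mathfrak{m}_i$ corresponds to the eigenvalue $\lambda_i$ and $\lambda_1<\cdots<\lambda_r$. Then: (i) for $j\in\{1,r\}$ and every $Y\in\mathfrak{m}$, $\mathrm{Ric}^d(Y_j,Y_j)\le\mathrm{Ric}^d_j(Y_j,Y_j)$, where $Y_j$ is the $\mathfrak{m}_j$-component of $Y$; (ii) $\mathrm{s}^d_1+\cdots+\mathrm{s}^d_r=\mathrm{s}^d$.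
   Context: A reductive decomposition means $\mathfrak{m}$ is an $\mathrm{Ad}(H)$-invariant vector space complement of $\mathfrak{h}$ in $\mathfrak{g}$; $[X,Y]_{\mathfrak{m}}$ is the $\mathfrak{m}$-component of $[X,Y]$ in $\mathfrak{g}=\mathfrak{h}\oplus\mathfrak{m}$, and $\mathfrak{m}\cong T_{eH}(G/H)$. $G$-invariant tensor fields correspond to $\mathrm{Ad}(H)$-invariant tensors on $\mathfrak{m}$. A Codazzi tensor field is a symmetric twice-covariant tensor field $A$ with $(\nabla_XA)(Y,Z)=(\nabla_YA)(X,Z)$ for all vector fields, $\nabla$ the Levi-Civita connection. The Levi-Civita product $\alpha:\mathfrak{m}\times\mathfrak{m}\to\mathfrak{m}$ is defined by $2\langle\alpha(X,Y),Z\rangle=\langle[X,Y]_{\mathfrak{m}},Z\rangle-\langle X,[Y,Z]_{\mathfrak{m}}\rangle-\langle[X,Z]_{\mathfrak{m}},Y\rangle$. The difference curvature tensor is $R^d=R-R^0$, where $R$ is the Riemann curvature at $eH$ and $R^0(X,Y)Z=-[[X,Y]_{\mathfrak{h}},Z]$ is the curvature of the canonical connection of the second kind; explicitly $R^d(X,Y)Z=\alpha(X,\alpha(Y,Z))-\alpha(Y,\alpha(X,Z))-\alpha([X,Y]_{\mathfrak{m}},Z)$ for $X,Y,Z\in\mathfrak{m}$. The difference Ricci tensor is $\mathrm{Ric}^d(Y,Z)=\mathrm{tr}(X\mapsto R^d(X,Y)Z)$ (trace over $\mathfrak{m}$), and $\mathrm{s}^d$ is its trace with respect to $\langle\cdot,\cdot\rangle$.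 Each eigenspace $\mathfrak{m}_i$ is closed under $[\cdot,\cdot]_{\mathfrak{m}}$ and $\alpha$, so for $Y_i,Z_i\in\mathfrak{m}_i$ the endomorphism $X\mapsto R^d(X,Y_i)Z_i$ of $\mathfrak{m}$ restricts to an endomorphism of $\mathfrak{m}_i$; $\mathrm{Ric}^d_i(Y_i,Z_i)$ is the trace of this restriction, and $\mathrm{s}^d_i$ is the trace of $\mathrm{Ric}^d_i$ with respect to $\langle\cdot,\cdot\rangle|_{\mathfrak{m}_i\times\mathfrak{m}_i}$. *)

(* Algebraic (Lie-algebra-level) setting on m = 'rV[R]_n. *)
From HB Require Import structures.
From mathcomp Require Import all_boot all_order all_algebra.
Set Implicit Arguments. Unset Strict Implicit. Unset Printing Implicit Defensive.
Import Order.TTheory GRing.Theory Num.Theory.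
Local Open Scope ring_scope.

Section HomogeneousAlgebra.
Variables (R : realFieldType) (n : nat).

Definition evec (a : 'I_n) : 'rV[R]_n := delta_mx 0 a.

(* inner product <X,Y> on m given by a (symmetric positive definite) Gram matrix Q *)
Definition ipQ (Q : 'M[R]_n) (X Y : 'rV[R]_n) : R := (X *m Q *m Y^T) 0 0.

(* the bilinear form A(X,Y) given by its matrix Bm *)
Definition bilin (Bm : 'M[R]_n) (X Y : 'rV[R]_n) : R := (X *m Bm *m Y^T) 0 0.

(* [X,Y]_m, given by structure constants c a b = [e_a,e_b]_m *)
Definition brm (c : 'I_n -> 'I_n -> 'rV[R]_n) (X Y : 'rV[R]_n) : 'rV[R]_n :=
  \sum_(a < n) \sum_(b < n) (X 0 a * Y 0 b) *: c a b.

(* Levi-Civita product: the unique alpha(X,Y) with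
   2<alpha(X,Y),Z> = <[X,Y]_m,Z> - <X,[Y,Z]_m> - <[X,Z]_m,Y>  for all Z *)
Definition alphaLC Q c (X Y : 'rV[R]_n) : 'rV[R]_n :=
  (\row_k (2^-1 * (ipQ Q (brm c X Y) (evec k) - ipQ Q X (brm c Y (evec k))
                    - ipQ Q (brm c X (evec k)) Y))) *m invmx Q.

Definition Rd Q c (X Y Z : 'rV[R]_n) : 'rV[R]_n :=
  alphaLC Q c X (alphaLC Q c Y Z) - alphaLC Q c Y (alphaLC Q c X Z)
  - alphaLC Q c (brm c X Y) Z.

Definition Ricd Q c (Y Z : 'rV[R]_n) : R := \tr (lin1_mx (fun X => Rd Q c X Y Z)).

Definition restr_trace (f : 'rV[R]_n -> 'rV[R]_n) (E : 'M[R]_n) : R :=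
  \tr (row_base E *m lin1_mx f *m pinvmx (row_base E)).

Definition metric_trace_on Q (b : 'rV[R]_n -> 'rV[R]_n -> R) (E : 'M[R]_n) : R :=
  let B := row_base E in
  let G := B *m Q *m B^T in
  \sum_(p < \rank E) \sum_(q < \rank E) invmx G p q * b (row p B) (row q B).

Definition sd Q c : R :=
  \sum_(a < n) \sum_(b < n) invmx Q a b * Ricd Q c (evec a) (evec b).

Definition Ricd_on Q c (E : 'M[R]_n) (Y Z : 'rV[R]_n) : R :=
  restr_trace (fun X => Rd Q c X Y Z) E.

Definition sd_on Q c (E : 'M[R]_n) : R := metric_trace_on Q (Ricd_on Q c E) E.

(* Covariant derivative at eH of the G-invariant tensor A (matrix Bm) :
   (nabla_X A)(Y,Z) = - A(alpha(X,Y),Z) - A(Y,alpha(X,Z)) *)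
Definition nablaA Q c Bm (X Y Z : 'rV[R]_n) : R :=
  - bilin Bm (alphaLC Q c X Y) Z - bilin Bm Y (alphaLC Q c X Z).

Definition codazzi Q c Bm : Prop :=
  forall X Y Z : 'rV[R]_n, nablaA Q c Bm X Y Z = nablaA Q c Bm Y X Z.

(* eigenspace m_i of A w.r.t. <.,.> for eigenvalue l: {X | A(X,.) = l <X,.>},
   i.e. the eigenspace of the <.,.>-self-adjoint endomorphism Bm Q^-1 *)
Definition eigsp Q Bm (l : R) : 'M[R]_n := eigenspace (Bm *m invmx Q) l.

End HomogeneousAlgebra.

From HB Require Import structures.
From mathcomp Require Import all_boot all_order all_algebra.
From mathcomp Require Import ring lra.
Set Implicit Arguments. Unset Strict Implicit. Unset Printing Implicit Defensive.
Import Order.TTheory GRing.Theory Num.Theory.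
Local Open Scope ring_scope.

(* Put T(X,Y,Z) := <alpha(X,Y),Z>, which is skew in (Y,Z).  On eigenvectors
   X, Y, Z of A with eigenvalues a, b, d the Codazzi equation reads
   (d - b) T(X,Y,Z) = (d - a) T(Y,X,Z); in particular T(X,Y,Z) = 0 when X and Z
   lie in one eigenspace and Y in another, so each m_i is closed under alpha and
   [.,.]_m.  Expanding all traces in an orthogonal basis adapted to
   m = m_1 + ... + m_r, for Y in m_j one gets
     Ric^d(Y,Y) - Ric^d_j(Y,Y) = - sum T(x,Y,z) T(z,Y,x) / (|x|^2 |z|^2)
   over basis vectors x, z outside m_j, and by Codazzi
   (a - l_j) (d - l_j) T(x,Y,z) T(z,Y,x) is a square, a and d being the
   eigenvalues of x and z.  If l_j is the least or the largest eigenvalue this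
   factor is positive, whence (i).  Summing the identity over the whole basis
   leaves a sum over triples x, y, z from three distinct eigenspaces, which
   vanishes by the Codazzi consequence
     T(x,y,z) T(z,y,x) + T(y,x,z) T(z,x,y) + T(x,z,y) T(y,z,x) = 0,
   whence (ii). *)

Lemma sumr_skew_eq0 (R : numFieldType) (I : finType) (P : pred I) (F : I -> I -> R) :
  (forall x z, F z x = - F x z) -> \sum_(x | P x) \sum_(z | P z) F x z = 0.
Proof.
move=> F_skew; set S := LHS; have : S == - S.
  rewrite {2}/S exchange_big -sumrN; apply/eqP/eq_bigr => z _.
  by rewrite -sumrN; apply: eq_bigr => x _; rewrite F_skew.
by rewrite -addr_eq0 -mulr2n mulrn_eq0 => /eqP.
Qed.

Lemma sumr_cycle_eq0 (R : numFieldType) (I : finType) (F : I -> I -> I -> R) :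
  (forall x y z, F x y z + F y x z + F x z y = 0) ->
  \sum_x \sum_y \sum_z F x y z = 0.
Proof.
move=> F_cycle; set S := LHS.
have S12 : \sum_x \sum_y \sum_z F y x z = S by rewrite exchange_big.
have S23 : \sum_x \sum_y \sum_z F x z y = S.
  by apply: eq_bigr => x _; rewrite exchange_big.
have : S *+ 3 == 0.
  rewrite !mulrS mulr0n addr0 -{2}S12 -{2}S23 /S -!big_split big1 // => x _.
  rewrite -!big_split big1 // => y _; rewrite -!big_split big1 // => z _.
  by rewrite /= addrA F_cycle.
by rewrite mulrn_eq0 => /eqP.
Qed.

Lemma scale_addB3 (R : comPzRingType) n a (A A' B B' C C' : 'rV[R]_n) :
  (a *: A + A') - (a *: B + B') - (a *: C + C') = a *: (A - B - C) + (A' - B' - C').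
Proof. by apply/rowP => k; rewrite !mxE; ring. Qed.

Lemma subrmx_sub (F : fieldType) m1 m2 n (A B : 'M[F]_(m1, n)) (C : 'M_(m2, n)) :
  (A <= C)%MS -> (B <= C)%MS -> (A - B <= C)%MS.
Proof. by move=> AC BC; rewrite addmx_sub // eqmx_opp. Qed.

Lemma mxtrace_restrict_proj (F : fieldType) n m (E : 'M[F]_(m, n)) (L P : 'M[F]_n) :
  (forall X : 'rV_n, (X *m P <= E)%MS) ->
  (forall X : 'rV_n, (X <= E)%MS -> X *m P = X) ->
  (forall X : 'rV_n, (X <= E)%MS -> (X *m L <= E)%MS) ->
  \tr (row_base E *m L *m pinvmx (row_base E)) = \tr (L *m P).
Proof.
move=> PE P_id L_stable; set B := row_base E.
have BE : (B <= E)%MS by rewrite eq_row_base.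
have P_idmx k (M : 'M_(k, n)) : (M <= E)%MS -> M *m P = M.
  move=> ME; apply/row_matrixP => i; rewrite row_mul P_id //.
  exact: submx_trans (row_sub i M) ME.
have PB : (P <= B)%MS.
  by rewrite eq_row_base; apply/row_subP => i; rewrite -(mul1mx P) row_mul PE.
have BLE : (pinvmx B *m B *m L <= E)%MS.
  rewrite -mulmxA; apply: submx_trans (submxMl _ _) _.
  by apply/row_subP => i; rewrite row_mul L_stable // (submx_trans (row_sub i B)).
rewrite mxtrace_mulC mulmxA -(P_idmx _ _ BLE) mxtrace_mulC.
by rewrite mulmxA mulmxA mulmxKpV // mxtrace_mulC.
Qed.

Lemma trmx_mul_rows (R : comPzRingType) k n (B : 'M[R]_(k, n)) (M : 'M[R]_k) :
  B^T *m M *m B = \sum_(pq : 'I_k * 'I_k) M pq.1 pq.2 *: ((row pq.1 B)^T *m row pq.2 B).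
Proof.
apply/matrixP => i j; rewrite summxE -(pair_bigA _ (fun p q =>
  (M p q *: ((row p B)^T *m row q B)) i j)) !mxE exchange_big /=.
apply: eq_bigr => q _; rewrite !mxE big_distrl /=; apply: eq_bigr => p _.
by rewrite !mxE big_ord1 !mxE mulrCA mulrA.
Qed.

Lemma lin1_mxE (R : pzRingType) m k (f : 'rV[R]_m -> 'rV[R]_k) u :
  linear f -> u *m lin1_mx f = f u.
Proof.
move=> f_lin; exact: (mul_rV_lin1 (HB.pack f (GRing.isLinear.Build _ _ _ _ f f_lin))).
Qed.

Lemma lin1_mx_comb (R : pzRingType) m k (f g h : 'rV[R]_m -> 'rV[R]_k) a :
  (forall X, h X = a *: f X + g X) -> lin1_mx h = a *: lin1_mx f + lin1_mx g.
Proof. by move=> hE; apply/matrixP => i j; rewrite !mxE hE !mxE. Qed.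

Lemma mxtrace_lin1_comb (R : pzRingType) m (f g h : 'rV[R]_m -> 'rV[R]_m) a :
  (forall X, h X = a *: f X + g X) ->
  \tr (lin1_mx h) = a * \tr (lin1_mx f) + \tr (lin1_mx g).
Proof. by move=> /lin1_mx_comb ->; rewrite linearD linearZ. Qed.

Lemma biscalar_coord (R : comNzRingType) n (b : {biscalar 'rV[R]_n}) (I : finType)
    (w : I -> R) (u u' : I -> 'rV[R]_n) :
  \sum_a \sum_a' (\sum_i w i *: ((u i)^T *m u' i)) a a' * b 'e_a 'e_a' =
  \sum_i w i * b (u i) (u' i).
Proof.
under eq_bigr => a _ do under eq_bigr => a' _ do rewrite summxE big_distrl.
under eq_bigr => a _ do rewrite exchange_big.
rewrite exchange_big; apply: eq_bigr => i _ /=.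
rewrite [in RHS](row_sum_delta (u i)) [in RHS](row_sum_delta (u' i)).
rewrite linear_sumlz mulr_sumr; apply: eq_bigr => a _.
rewrite linear_sumr mulr_sumr; apply: eq_bigr => a' _.
by rewrite linearZl_LR linearZr_LR !mxE big_ord1 !mxE /=; ring.
Qed.

Section Bilinearity.
Variables (R : realFieldType) (n : nat) (Q : 'M[R]_n) (c : 'I_n -> 'I_n -> 'rV[R]_n).

Local Notation ip := (ipQ Q).
Local Notation br := (brm c).

Lemma ipQ_is_bilinear : bilinear_for *%R *%R ip.
Proof.
split=> [Y a X X' | X a Y Y']; rewrite /ipQ /=.
  by rewrite !mulmxDl -!scalemxAl !mxE.
by rewrite linearD linearZ /= mulmxDr -scalemxAr !mxE.
Qed.

HB.instance Definition _ :=
  bilinear_isBilinear.Build R 'rV[R]_n 'rV[R]_n R _ _ ip ipQ_is_bilinear.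

Lemma brm_is_bilinear : bilinear_for *:%R *:%R br.
Proof.
split=> [Y a X X' | X a Y Y']; rewrite /brm /= scaler_sumr -big_split;
  apply: eq_bigr => i _; rewrite scaler_sumr -big_split; apply: eq_bigr => j _;
  by rewrite /= !mxE scalerA -scalerDl; congr (_ *: _); ring.
Qed.

HB.instance Definition _ :=
  bilinear_isBilinear.Build R 'rV[R]_n 'rV[R]_n 'rV[R]_n _ _ br brm_is_bilinear.

Lemma alphaLC_is_bilinear : bilinear_for *:%R *:%R (alphaLC Q c).
Proof.
split=> [Y a X X' | X a Y Y']; rewrite /alphaLC /= scalemxAl -mulmxDl;
  congr (_ *m _); apply/rowP => k; rewrite !mxE;
  rewrite ?(linearDl, linearDr, linearZl_LR, linearZr_LR) /=; ring.
Qed.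

HB.instance Definition _ := bilinear_isBilinear.Build R 'rV[R]_n 'rV[R]_n
  'rV[R]_n _ _ (alphaLC Q c) alphaLC_is_bilinear.

Lemma Rd_is_bilinear X : bilinear_for *:%R *:%R (Rd Q c X).
Proof.
split=> [Z a Y Y' | Y a Z Z']; rewrite /Rd /=;
  by rewrite ?(linearDl, linearDr, linearZl_LR, linearZr_LR) /= scale_addB3.
Qed.

HB.instance Definition _ X := bilinear_isBilinear.Build R 'rV[R]_n 'rV[R]_n
  'rV[R]_n _ _ (Rd Q c X) (Rd_is_bilinear X).

Lemma Rd_linear1 Y Z : linear (fun X => Rd Q c X Y Z).
Proof.
move=> a X X'; rewrite /Rd ?(linearDl, linearDr, linearZl_LR, linearZr_LR) /=.
by rewrite scale_addB3.
Qed.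

Lemma restr_trace_comb (f g h : 'rV[R]_n -> 'rV[R]_n) a (E : 'M[R]_n) :
  (forall X, h X = a *: f X + g X) ->
  restr_trace h E = a * restr_trace f E + restr_trace g E.
Proof.
move=> /lin1_mx_comb hE; rewrite /restr_trace hE mulmxDr mulmxDl.
by rewrite -scalemxAr -scalemxAl linearD linearZ.
Qed.

Lemma Ricd_is_bilinear : bilinear_for *%R *%R (Ricd Q c).
Proof.
split=> [Z a Y Y' | Y a Z Z']; apply: mxtrace_lin1_comb => X.
  exact: linearPl.
exact: linearPr.
Qed.

HB.instance Definition _ :=
  bilinear_isBilinear.Build R 'rV[R]_n 'rV[R]_n R _ _ (Ricd Q c) Ricd_is_bilinear.

Lemma Ricd_on_is_bilinear E : bilinear_for *%R *%R (Ricd_on Q c E).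
Proof.
split=> [Z a Y Y' | Y a Z Z']; apply: restr_trace_comb => X.
  exact: linearPl.
exact: linearPr.
Qed.

HB.instance Definition _ E := bilinear_isBilinear.Build R 'rV[R]_n 'rV[R]_n R
  _ _ (Ricd_on Q c E) (Ricd_on_is_bilinear E).

End Bilinearity.

Section Homogeneous.
Variables (R : realFieldType) (n : nat) (Q : 'M[R]_n) (c : 'I_n -> 'I_n -> 'rV[R]_n).
Hypothesis Q_sym : Q^T = Q.
Hypothesis Q_posdef : forall X : 'rV[R]_n, X != 0 -> 0 < ipQ Q X X.
Hypothesis c_skew : forall a b, c a b = - c b a.
Implicit Types X Y Z v : 'rV[R]_n.

Local Notation ip := (ipQ Q).
Local Notation br := (brm c).
Local Notation al := (alphaLC Q c).

Lemma ipQC X Y : ip X Y = ip Y X.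
Proof.
by rewrite /ipQ -{1}[X *m Q *m Y^T]trmxK mxE !trmx_mul !trmxK Q_sym mulmxA.
Qed.

Lemma ipQ_self_eq0 X : (ip X X == 0) = (X == 0).
Proof.
have [->|/Q_posdef/lt0r_neq0/negbTE //] := eqVneq X 0.
by rewrite linear0l eqxx.
Qed.

Lemma ipQ_self_ge0 X : 0 <= ip X X.
Proof. by have [->|/Q_posdef/ltW //] := eqVneq X 0; rewrite linear0l. Qed.

Lemma unitmx_Q : Q \in unitmx.
Proof.
rewrite -row_free_unit -kermx_eq0; apply/eqP/row_matrixP => i; rewrite row0.
have uQ : row i (kermx Q) *m Q = 0 by rewrite -row_mul mulmx_ker row0.
by apply/eqP; rewrite -ipQ_self_eq0 /ipQ uQ mul0mx mxE.
Qed.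

Lemma brm_skew X Y : br X Y = - br Y X.
Proof.
rewrite /brm exchange_big -sumrN; apply: eq_bigr => i _.
by rewrite -sumrN; apply: eq_bigr => j _; rewrite c_skew scalerN mulrC.
Qed.

Lemma alphaLC_ipE X Y Z :
  ip (al X Y) Z = 2^-1 * (ip (br X Y) Z - ip X (br Y Z) - ip (br X Z) Y).
Proof.
rewrite {1}/ipQ /alphaLC mulmxKV ?unitmx_Q // mxE [in RHS](row_sum_delta Z).
rewrite ![br _ (\sum_j _)]linear_sumr ![ip _ (\sum_j _)]linear_sumr linear_sumlz.
rewrite -!sumrB mulr_sumr; apply: eq_bigr => k _.
by rewrite !(linearZr_LR, linearZl_LR) /= !mxE; ring.
Qed.

Lemma alphaLC_ip_skew X Y Z : ip (al X Y) Z = - ip (al X Z) Y.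
Proof.
rewrite !alphaLC_ipE (brm_skew Z) linearNr /= (ipQC (br X Y)) (ipQC (br X Z)).
ring.
Qed.

Lemma alphaLC_torsion X Y Z : ip (al X Y) Z - ip (al Y X) Z = ip (br X Y) Z.
Proof.
rewrite !alphaLC_ipE (brm_skew Y X) linearNl /= (ipQC Y) (ipQC X (br Y Z)).
by field.
Qed.

Definition oproj v X := (ip X v / ip v v) *: v.

Lemma oproj_is_linear v : linear (oproj v).
Proof. by move=> a X Y; rewrite /oproj linearPl scalerA -scalerDl mulrDl mulrA. Qed.

HB.instance Definition _ v :=
  GRing.isLinear.Build R 'rV[R]_n 'rV[R]_n _ (oproj v) (oproj_is_linear v).

Lemma ip_oprojl v X Y : ip (oproj v X) Y = ip X v / ip v v * ip v Y.
Proof. by rewrite linearZl_LR. Qed.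

Lemma ip_oproj v X : ip (oproj v X) v = ip X v.
Proof.
rewrite ip_oprojl; have [/eqP|nz] := eqVneq (ip v v) 0; last by rewrite mulfVK.
by rewrite ipQ_self_eq0 // => /eqP->; rewrite !linear0r mulr0.
Qed.

Lemma oproj_orth v X : ip X v = 0 -> oproj v X = 0.
Proof. by move=> Xv; rewrite /oproj Xv mul0r scale0r. Qed.

(* Zero vectors are allowed in an orthobasis; they contribute nothing since
   [oproj 0 X = 0]. *)
Definition orthobasis (I : finType) m (E : 'M_(m, n)) (v : I -> 'rV[R]_n) :=
  [/\ forall i, (v i <= E)%MS,
      forall i j, i != j -> ip (v i) (v j) = 0
    & forall X, (X <= E)%MS -> X = \sum_i oproj (v i) X].

Lemma orthobasis_orth (I : finType) m (E : 'M_(m, n)) (v : I -> 'rV[R]_n) X Y :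
  orthobasis E v -> (forall i, ip X (v i) = 0) -> (Y <= E)%MS -> ip X Y = 0.
Proof.
case=> _ _ span Xv /span ->; rewrite linear_sumr big1 // => i _.
by rewrite /oproj linearZr_LR /= Xv mulr0.
Qed.

Lemma oproj_id v : oproj v v = v.
Proof.
have [/eqP|nz] := eqVneq (ip v v) 0; last by rewrite /oproj divff ?scale1r.
by rewrite ipQ_self_eq0 // => /eqP->; rewrite /oproj scaler0.
Qed.

Lemma orthobasis_exists m (E : 'M_(m, n)) : {v : 'I_m -> 'rV[R]_n | orthobasis E v}.
Proof.
elim: m E => [|m IH] E.
  exists (fun=> 0); split=> [[]//|[]//|X].
  by rewrite (flatmx0 E) => /submx0null->; rewrite big_ord0.
have [w wb] := IH (dsubmx (E : 'M_(1 + m, n))); have [w_sub w_orth w_span] := wb.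
set u := usubmx (E : 'M_(1 + m, n)); set d := dsubmx (E : 'M_(1 + m, n)).
set u' := u - \sum_q oproj (w q) u.
have /andP[uE dE] : (u <= E)%MS && (d <= E)%MS.
  by rewrite -col_mx_sub vsubmxK.
have u'_orth q : ip u' (w q) = 0.
  rewrite linearBl linear_sumlz (bigD1 q) //= ip_oproj big1 ?addr0 ?subrr //.
  by move=> q' q'q; rewrite ip_oprojl (w_orth q' q) ?mulr0.
have uu'd : (u - u' <= d)%MS.
  by rewrite opprB addrC subrK; apply: summx_sub => q _; apply/scalemx_sub.
exists (fun i => if unlift ord0 i is Some q then w q else u'); split.
- move=> i; case: (unliftP ord0 i) => [q|] _; first exact: submx_trans (w_sub q) dE.
  rewrite subrmx_sub //; apply: summx_sub => q _.
  exact/scalemx_sub/(submx_trans (w_sub q)).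
- move=> i j; case: (unliftP ord0 i) => [q|] ->; case: (unliftP ord0 j) => [q'|] -> //.
  + by rewrite (inj_eq lift_inj); apply: w_orth.
  + by rewrite ipQC.
move=> X; rewrite -[X in (_ <= X)%MS](vsubmxK (E : 'M_(1 + m, n))) -/u -/d -(addsmxE u d).
case/sub_addsmxP=> -[a b] /= ->; rewrite [a]mx11_scalar mul_scalar_mx.
set Y := a 0 0 *: (u - u') + b *m d.
have -> : a 0 0 *: u + b *m d = a 0 0 *: u' + Y.
  by rewrite addrA -scalerDr [u' + _]addrC subrK.
have Yd : (Y <= d)%MS.
  by rewrite addmx_sub ?scalemx_sub ?submxMl.
have Yu' : ip Y u' = 0.
  by rewrite ipQC; apply: orthobasis_orth wb u'_orth Yd.
rewrite big_ord_recl unlift_none linearP /= oproj_id (oproj_orth Yu') addr0.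
congr (_ + _); rewrite [LHS]w_span //; apply: eq_bigr => q _.
by rewrite liftK [in RHS]linearP /= (oproj_orth (u'_orth q)) scaler0 add0r.
Qed.

Lemma orthobasis_sum (I K : finType) (E : I -> 'M[R]_n) (v : I -> K -> 'rV[R]_n) :
  (forall i, orthobasis (E i) (v i)) ->
  (forall i k X Y, i != k -> (X <= E i)%MS -> (Y <= E k)%MS -> ip X Y = 0) ->
  (\sum_i E i :=: 1%:M)%MS ->
  orthobasis 1%:M (fun x : I * K => v x.1 x.2).
Proof.
move=> vb E_orth E_sum; split=> [x|[i p] [k q] /=|X _]; first exact: submx1.
  have [<-|ik] := eqVneq i k.
    by rewrite xpair_eqE eqxx; case: (vb i) => _ + _; apply.
  by move=> _; apply: (E_orth i k) ik _ _; [case: (vb i) | case: (vb k)].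
have /sub_sumsmxP[a ->] : (X <= \sum_i E i)%MS by rewrite E_sum submx1.
have block i : a i *m E i = \sum_(x : I * K) oproj (v x.1 x.2) (a i *m E i).
  rewrite -(pair_bigA _ (fun k p => oproj (v k p) (a i *m E i))) (bigD1 i) //=.
  rewrite [X in _ + X]big1 ?addr0; first by case: (vb i) => _ _ span; apply/span/submxMl.
  move=> k ki; apply: big1 => p _; apply: oproj_orth.
  by apply: (E_orth i k) (submxMl _ _) _; [rewrite eq_sym | case: (vb k)].
rewrite [LHS](eq_bigr _ (fun i _ => block i)) exchange_big; apply: eq_bigr => x _.
by rewrite linear_sum.
Qed.

Definition orthoprojmx (I : finType) (v : I -> 'rV[R]_n) : 'M[R]_n :=
  \sum_i (ip (v i) (v i))^-1 *: ((v i)^T *m v i).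

Lemma mul_orthoprojmx (I : finType) (v : I -> 'rV[R]_n) X :
  X *m Q *m orthoprojmx v = \sum_i oproj (v i) X.
Proof.
rewrite mulmx_sumr; apply: eq_bigr => i _.
rewrite -scalemxAr mulmxA [X *m Q *m _]mx11_scalar mul_scalar_mx scalerA.
by rewrite /oproj mulrC.
Qed.

(* [K] encodes the orthogonal projection onto [E] as [X |-> X *m Q *m K]. *)
Definition is_orthoproj m (E : 'M[R]_(m, n)) (K : 'M[R]_n) :=
  forall X, (X *m Q *m K <= E)%MS /\
    (forall Y, (Y <= E)%MS -> ip (X - X *m Q *m K) Y = 0).

Lemma orthoproj_unique m (E : 'M[R]_(m, n)) K1 K2 :
  is_orthoproj E K1 -> is_orthoproj E K2 -> K1 = K2.
Proof.
move=> K1E K2E; suff QK : Q *m K1 = Q *m K2.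
  by rewrite -(mulKmx unitmx_Q K1) QK mulKmx ?unitmx_Q.
apply/row_matrixP => i; rewrite !row_mul.
have -> : row i Q = row i 1%:M *m Q by rewrite -row_mul mul1mx.
set X := row i 1%:M; have [[X1E X1_orth] [X2E X2_orth]] := (K1E X, K2E X).
set D := X *m Q *m K1 - X *m Q *m K2.
have DE : (D <= E)%MS by rewrite subrmx_sub.
have D_split : D = (X - X *m Q *m K2) - (X - X *m Q *m K1).
  by rewrite [RHS]addrC opprB addrA subrK.
apply/eqP; rewrite -subr_eq0 -/D -ipQ_self_eq0 // {1}D_split linearBl /=.
by rewrite X1_orth // X2_orth // subrr.
Qed.

Lemma orthoproj_id m (E : 'M[R]_(m, n)) K X :
  is_orthoproj E K -> (X <= E)%MS -> X *m Q *m K = X.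
Proof.
move=> /(_ X)[XKE XK_orth] XE; apply/esym/eqP; rewrite -subr_eq0 -ipQ_self_eq0 //.
by rewrite XK_orth // subrmx_sub.
Qed.

Lemma orthobasis_orthoproj (I : finType) m (E : 'M[R]_(m, n)) (v : I -> 'rV[R]_n) :
  orthobasis E v -> is_orthoproj E (orthoprojmx v).
Proof.
move=> vb X; have [v_sub v_orth _] := vb; rewrite mul_orthoprojmx; split.
  by apply: summx_sub => i _; apply/scalemx_sub.
move=> Y; apply: orthobasis_orth vb _ => j.
rewrite linearBl linear_sumlz (bigD1 j) //= ip_oproj big1 ?addr0 ?subrr //.
by move=> i ij; rewrite ip_oprojl (v_orth i j) ?mulr0.
Qed.

Lemma row_base_orthoproj m (E : 'M[R]_(m, n)) :
  is_orthoproj E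
    ((row_base E)^T *m invmx (row_base E *m Q *m (row_base E)^T) *m row_base E).
Proof.
move: (row_base E) (eq_row_base E) (row_base_free E) => B BE B_free.
set G := B *m Q *m B^T.
have G_unit : G \in unitmx.
  rewrite -row_free_unit -kermx_eq0; apply/eqP/row_matrixP => i; rewrite row0.
  set u := row i (kermx G); have uG : u *m G = 0 by rewrite -row_mul mulmx_ker row0.
  apply: (row_free_inj B_free); rewrite mul0mx; apply/eqP.
  by rewrite -ipQ_self_eq0 // /ipQ trmx_mul mulmxA -!(mulmxA u) -/G mulmxA uG !mul0mx mxE.
move=> X; split; first by rewrite !mulmxA -BE submxMl.
move=> Y; rewrite -BE => /submxP[y ->].
rewrite /ipQ trmx_mul !mulmxA !mulmxBl.
have -> : X *m Q *m B^T *m invmx G *m B *m Q *m B^T = X *m Q *m B^T.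
  by rewrite -!mulmxA (mulmxA B Q) -/G mulVmx // mulmx1.
by rewrite subrr mxE.
Qed.

Lemma invmx_orthoproj : is_orthoproj 1%:M (invmx Q).
Proof.
by move=> X; rewrite mulmxK ?unitmx_Q // subrr submx1; split=> // Y _; rewrite linear0l.
Qed.

Lemma invmx_orthobasis (I : finType) (v : I -> 'rV[R]_n) :
  orthobasis 1%:M v -> invmx Q = orthoprojmx v.
Proof. by move/orthobasis_orthoproj; apply: orthoproj_unique invmx_orthoproj. Qed.

Lemma mxtrace_orthoprojmx (f : 'rV[R]_n -> 'rV[R]_n) (I : finType) (v : I -> 'rV[R]_n) :
  linear f ->
  \tr (lin1_mx f *m Q *m orthoprojmx v) =
    \sum_i (ip (v i) (v i))^-1 * ip (f (v i)) (v i).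
Proof.
move=> f_lin; rewrite mulmx_sumr linear_sum; apply: eq_bigr => i _ /=.
rewrite -scalemxAr mxtraceZ mulmxA mxtrace_mulC trace_mx11 !mulmxA.
by rewrite lin1_mxE.
Qed.

Lemma mxtrace_orthobasis (f : 'rV[R]_n -> 'rV[R]_n) (I : finType) (v : I -> 'rV[R]_n) :
  linear f -> orthobasis 1%:M v ->
  \tr (lin1_mx f) = \sum_i (ip (v i) (v i))^-1 * ip (f (v i)) (v i).
Proof.
move=> f_lin vb; rewrite -[lin1_mx f](mulmxK unitmx_Q) (invmx_orthobasis vb).
exact: mxtrace_orthoprojmx.
Qed.

Lemma restr_trace_orthobasis (f : 'rV[R]_n -> 'rV[R]_n) (I : finType) (E : 'M[R]_n)
    (v : I -> 'rV[R]_n) :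
  linear f -> orthobasis E v -> (forall X, (X <= E)%MS -> (f X <= E)%MS) ->
  restr_trace f E = \sum_i (ip (v i) (v i))^-1 * ip (f (v i)) (v i).
Proof.
move=> f_lin vb f_stable; have vP := orthobasis_orthoproj vb.
rewrite /restr_trace (@mxtrace_restrict_proj _ _ _ _ _ (Q *m orthoprojmx v)).
- by rewrite mulmxA mxtrace_orthoprojmx.
- by move=> X; rewrite mulmxA; case: (vP X).
- by move=> X; rewrite mulmxA; apply: orthoproj_id.
- by move=> X XE; rewrite lin1_mxE // f_stable.
Qed.

Lemma metric_trace_orthobasis (b : {biscalar 'rV[R]_n}) (I : finType) (E : 'M[R]_n)
    (v : I -> 'rV[R]_n) :
  orthobasis E v ->
  metric_trace_on Q b E = \sum_i (ip (v i) (v i))^-1 * b (v i) (v i).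
Proof.
move=> vb; rewrite /metric_trace_on pair_bigA /= -biscalar_coord -trmx_mul_rows.
rewrite (orthoproj_unique (row_base_orthoproj E) (orthobasis_orthoproj vb)).
exact: biscalar_coord.
Qed.

Section CodazziTensor.
Variable Bm : 'M[R]_n.
Hypothesis Bm_sym : Bm^T = Bm.
Hypothesis A_codazzi : codazzi Q c Bm.

Local Notation E l := (eigsp Q Bm l).
Local Notation T X Y Z := (ip (al X Y) Z).

Lemma eigsp_mul l X : (X <= E l)%MS -> X *m Bm = l *: (X *m Q).
Proof.
move/eigenspaceP => XE.
by rewrite -(mulmxKV unitmx_Q (X *m Bm)) -(mulmxA X Bm) XE -scalemxAl.
Qed.

Lemma bilin_eigspl l X Y : (X <= E l)%MS -> bilin Bm X Y = l * ip X Y.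
Proof. by move=> XE; rewrite /bilin (eigsp_mul XE) -scalemxAl mxE. Qed.

Lemma bilinC X Y : bilin Bm X Y = bilin Bm Y X.
Proof.
by rewrite /bilin -{1}[X *m Bm *m Y^T]trmxK mxE !trmx_mul !trmxK Bm_sym mulmxA.
Qed.

Lemma bilin_eigspr l X Y : (Y <= E l)%MS -> bilin Bm X Y = l * ip X Y.
Proof. by move=> YE; rewrite bilinC (bilin_eigspl _ YE) ipQC. Qed.

Lemma eigsp_orth l l' X Y :
  l != l' -> (X <= E l)%MS -> (Y <= E l')%MS -> ip X Y = 0.
Proof.
move=> ll' XE YE; have : (l - l') * ip X Y = 0.
  by rewrite mulrBl -(bilin_eigspl _ XE) -(bilin_eigspr _ YE) subrr.
by move/eqP; rewrite mulf_eq0 subr_eq0 (negbTE ll') => /eqP.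
Qed.

Lemma codazzi_eigsp a b d X Y Z :
  (X <= E a)%MS -> (Y <= E b)%MS -> (Z <= E d)%MS ->
  (d - b) * T X Y Z = (d - a) * T Y X Z.
Proof.
move=> XE YE ZE; have := A_codazzi X Y Z; rewrite /nablaA.
rewrite !(bilin_eigspr _ ZE) (bilin_eigspl _ YE) (bilin_eigspl _ XE).
rewrite (ipQC Y) (ipQC X) (alphaLC_ip_skew X Z) (alphaLC_ip_skew Y Z) => codazzi_XYZ.
by rewrite !mulrBl; lra.
Qed.

Lemma alphaLC_ip_eigsp0 a b X Y Z :
  a != b -> (X <= E a)%MS -> (Y <= E b)%MS -> (Z <= E a)%MS -> T X Y Z = 0.
Proof.
move=> ab XE YE ZE; have := codazzi_eigsp XE YE ZE; rewrite subrr mul0r.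
by move/eqP; rewrite mulf_eq0 subr_eq0 (negbTE ab) => /eqP.
Qed.

Lemma codazzi_sqr a b d X Y Z :
  (X <= E a)%MS -> (Y <= E b)%MS -> (Z <= E d)%MS ->
  (d - b) * (a - b) * (T X Y Z * T Z Y X) = ((d - a) * T Y X Z) ^+ 2.
Proof.
move=> XE YE ZE; rewrite mulrACA (codazzi_eigsp XE YE ZE) (codazzi_eigsp ZE YE XE).
by rewrite (alphaLC_ip_skew Y Z); ring.
Qed.

Lemma codazzi_cycle a b d X Y Z :
  a != b -> b != d -> a != d ->
  (X <= E a)%MS -> (Y <= E b)%MS -> (Z <= E d)%MS ->
  T X Y Z * T Z Y X + T Y X Z * T Z X Y + T X Z Y * T Y Z X = 0.
Proof.
move=> ab bd ad XE YE ZE.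
have c1 := codazzi_eigsp XE YE ZE; have c2 := codazzi_eigsp XE ZE YE.
have nz : (d - a) * (b - a) != 0 by rewrite mulf_neq0 // subr_eq0 eq_sym.
rewrite (alphaLC_ip_skew Z Y) (alphaLC_ip_skew X Z) (alphaLC_ip_skew Y Z) in c2 *.
apply: (mulIf nz); rewrite mul0r.
set t := T X Y Z in c1 c2 *; set A := T Y X Z in c1 c2 *; set B := T Z X Y in c1 c2 *.
have -> : (t * - B + A * B + - t * - A) * ((d - a) * (b - a)) =
    - t * (d - a) * ((b - a) * B) + (d - a) * A * ((b - a) * B)
    + t * (b - a) * ((d - a) * A) by ring.
by rewrite -c1 -c2; ring.
Qed.

Section EigenDecomposition.
Variables (r : nat) (lam : 'I_r -> R) (v : 'I_r -> 'I_n -> 'rV[R]_n).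
Hypothesis lam_inj : injective lam.
Hypothesis eigsp_sum : (\sum_i E (lam i) :=: 1%:M)%MS.
Hypothesis v_basis : forall i, orthobasis (E (lam i)) (v i).

Local Notation J := ('I_r * 'I_n)%type.
Local Notation vx x := (v x.1 x.2).
Local Notation w x := (ip (vx x) (vx x))^-1.

Lemma lam_neq i k : i != k -> lam i != lam k.
Proof. by rewrite (inj_eq lam_inj). Qed.

Lemma vx_sub (x : J) : (vx x <= E (lam x.1))%MS.
Proof. by case: (v_basis x.1). Qed.

Lemma vx_basis : orthobasis 1%:M (fun x : J => vx x).
Proof.
apply: orthobasis_sum v_basis _ eigsp_sum => i k X Y ik.
exact: eigsp_orth (lam_neq ik).
Qed.

Lemma vx_expand X : X = \sum_(z : J) (w z * ip X (vx z)) *: vx z.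
Proof.
case: vx_basis => _ _ /(_ X (submx1 X)) {1}->.
by apply: eq_bigr => z _; rewrite /oproj mulrC.
Qed.

Lemma ip_parseval X Y : ip X Y = \sum_(z : J) w z * (ip X (vx z) * ip Y (vx z)).
Proof.
rewrite {1}[Y]vx_expand linear_sumr; apply: eq_bigr => z _.
by rewrite linearZr_LR /=; ring.
Qed.

Lemma alphaLC_ip_expand U Y Z :
  T U Y Z = \sum_(z : J) w z * (ip U (vx z) * T (vx z) Y Z).
Proof.
rewrite {1}[U]vx_expand linear_sumlz linear_sumlz; apply: eq_bigr => z _.
by rewrite !linearZl_LR /=; ring.
Qed.

Lemma eigsp_mem i W :
  (forall k Y, k != i -> (Y <= E (lam k))%MS -> ip W Y = 0) -> (W <= E (lam i))%MS.
Proof.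
move=> W_orth; rewrite [W]vx_expand.
rewrite -(pair_bigA _ (fun k p => ((ip (v k p) (v k p))^-1 * ip W (v k p)) *: v k p)) /=.
rewrite (bigD1 i) //= [X in _ + X]big1 ?addr0 => [|k ki]; last first.
  by apply: big1 => p _; rewrite (W_orth k) ?mulr0 ?scale0r // (vx_sub (k, p)).
by apply: summx_sub => p _; rewrite scalemx_sub // (vx_sub (i, p)).
Qed.

Lemma alphaLC_eigsp i X Y :
  (X <= E (lam i))%MS -> (Y <= E (lam i))%MS -> (al X Y <= E (lam i))%MS.
Proof.
move=> XE YE; apply: eigsp_mem => k Z ki ZE.
rewrite (alphaLC_ip_skew X Y Z) (alphaLC_ip_eigsp0 _ XE ZE YE) ?oppr0 //.
by rewrite lam_neq // eq_sym.
Qed.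

Lemma brm_eigsp i X Y :
  (X <= E (lam i))%MS -> (Y <= E (lam i))%MS -> (br X Y <= E (lam i))%MS.
Proof.
move=> XE YE; apply: eigsp_mem => k Z ki ZE; have ik : lam i != lam k.
  by rewrite lam_neq // eq_sym.
rewrite -alphaLC_torsion (alphaLC_ip_skew X Y Z) (alphaLC_ip_skew Y X Z).
by rewrite (alphaLC_ip_eigsp0 ik XE ZE YE) (alphaLC_ip_eigsp0 ik YE ZE XE) subrr.
Qed.

Lemma Rd_eigsp i X Y Z : (X <= E (lam i))%MS -> (Y <= E (lam i))%MS ->
  (Z <= E (lam i))%MS -> (Rd Q c X Y Z <= E (lam i))%MS.
Proof.
move=> XE YE ZE.
by rewrite !subrmx_sub //; do ?[apply: alphaLC_eigsp | apply: brm_eigsp].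
Qed.

Lemma Ricd_basisE Y Z :
  Ricd Q c Y Z = \sum_(x : J) w x * ip (Rd Q c (vx x) Y Z) (vx x).
Proof. exact: mxtrace_orthobasis (Rd_linear1 Q c Y Z) vx_basis. Qed.

Lemma Ricd_on_basisE i Y Z : (Y <= E (lam i))%MS -> (Z <= E (lam i))%MS ->
  Ricd_on Q c (E (lam i)) Y Z =
    \sum_p (ip (v i p) (v i p))^-1 * ip (Rd Q c (v i p) Y Z) (v i p).
Proof.
move=> YE ZE; apply: restr_trace_orthobasis (Rd_linear1 Q c Y Z) (v_basis i) _.
by move=> X XE; apply: Rd_eigsp.
Qed.

Lemma sd_basisE : sd Q c = \sum_(x : J) w x * Ricd Q c (vx x) (vx x).
Proof. by rewrite /sd /evec (invmx_orthobasis vx_basis) biscalar_coord. Qed.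

Lemma sd_on_basisE i : sd_on Q c (E (lam i)) =
  \sum_p (ip (v i p) (v i p))^-1 * Ricd_on Q c (E (lam i)) (v i p) (v i p).
Proof. exact: metric_trace_orthobasis (v_basis i). Qed.

Lemma ip_Rd_cross j k X Y :
  k != j -> (X <= E (lam k))%MS -> (Y <= E (lam j))%MS ->
  ip (Rd Q c X Y Y) X = \sum_(z : J | z.1 != j) w z *
    (T Y X (vx z) * T X Y (vx z) - T X Y (vx z) * T (vx z) Y X
     + T Y X (vx z) * T (vx z) Y X).
Proof.
move=> kj XE YE; have kj' := lam_neq kj; have jk' : lam j != lam k by rewrite eq_sym.
rewrite /Rd !linearBl /= (alphaLC_ip_eigsp0 kj' XE (alphaLC_eigsp YE YE) XE) sub0r.
rewrite (alphaLC_ip_skew Y) opprK (ip_parseval (al Y X)) (alphaLC_ip_expand (br X Y)).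
rewrite -sumrB [RHS]big_mkcond; apply: eq_bigr => z _ /=.
rewrite -alphaLC_torsion; case: ifP => [_|/negbFE/eqP zj]; first by ring.
have zE : (vx z <= E (lam j))%MS by rewrite -zj vx_sub.
rewrite (alphaLC_ip_eigsp0 jk' YE XE zE) (alphaLC_ip_skew (vx z) Y X).
by rewrite (alphaLC_ip_eigsp0 jk' zE XE YE) !(mul0r, mulr0, subrr, oppr0).
Qed.

Lemma Ricd_sub_Ricd_on j Y : (Y <= E (lam j))%MS ->
  Ricd Q c Y Y - Ricd_on Q c (E (lam j)) Y Y =
  - \sum_(x : J | x.1 != j) \sum_(z : J | z.1 != j)
      w x * w z * (T (vx x) Y (vx z) * T (vx z) Y (vx x)).
Proof.
move=> YE; rewrite Ricd_basisE (Ricd_on_basisE YE YE).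
rewrite -(pair_bigA _ (fun i p =>
  (ip (v i p) (v i p))^-1 * ip (Rd Q c (v i p) Y Y) (v i p))).
rewrite (bigD1 j) //= addrAC subrr add0r (pair_big (fun i => i != j) xpredT) /=.
under eq_bigl => x do rewrite andbT.
transitivity (\sum_(x : J | x.1 != j) \sum_(z : J | z.1 != j)
    w x * w z * (T Y (vx x) (vx z) * T (vx x) Y (vx z)
                 + T Y (vx x) (vx z) * T (vx z) Y (vx x))
  - \sum_(x : J | x.1 != j) \sum_(z : J | z.1 != j)
    w x * w z * (T (vx x) Y (vx z) * T (vx z) Y (vx x))).
  rewrite -sumrB; apply: eq_bigr => x xj.
  rewrite -sumrB (ip_Rd_cross xj (vx_sub x) YE) big_distrr.
  by apply: eq_bigr => z _ /=; ring.
rewrite sumr_skew_eq0 ?sub0r // => x z.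
by rewrite (alphaLC_ip_skew Y (vx z) (vx x)); ring.
Qed.

Lemma Ricd_le_Ricd_on j Y :
  (forall k l, k != j -> l != j -> 0 < (lam k - lam j) * (lam l - lam j)) ->
  (Y <= E (lam j))%MS -> Ricd Q c Y Y <= Ricd_on Q c (E (lam j)) Y Y.
Proof.
move=> lam_ext YE; rewrite -subr_le0 Ricd_sub_Ricd_on // oppr_le0.
apply: sumr_ge0 => x xj; apply: sumr_ge0 => z zj.
apply: mulr_ge0; first by rewrite mulr_ge0 ?invr_ge0 ?ipQ_self_ge0.
rewrite -(pmulr_rge0 _ (lam_ext _ _ zj xj)).
by rewrite (codazzi_sqr (vx_sub x) YE (vx_sub z)) sqr_ge0.
Qed.

Lemma sum_sd_on : \sum_i sd_on Q c (E (lam i)) = sd Q c.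
Proof.
pose F x y z := if [&& x.1 != y.1, y.1 != z.1 & x.1 != z.1] then
  w x * w y * w z * (T (vx x) (vx y) (vx z) * T (vx z) (vx y) (vx x)) else 0.
have F_cycle x y z : F x y z + F y x z + F x z y = 0.
  rewrite /F; have [->|xy] := eqVneq x.1 y.1; first by rewrite /= ?andbF !addr0.
  have [->|yz] := eqVneq y.1 z.1; first by rewrite /= ?andbF !addr0.
  have [->|xz] := eqVneq x.1 z.1; first by rewrite /= ?andbF !addr0.
  have cycle := codazzi_cycle (lam_neq xy) (lam_neq yz) (lam_neq xz)
    (vx_sub x) (vx_sub y) (vx_sub z).
  by rewrite -[RHS](mulr0 (w x * w y * w z)) -{}cycle /=; ring.
rewrite sd_basisE; under eq_bigr => i _ do rewrite sd_on_basisE.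
rewrite pair_bigA /=; apply/eqP; rewrite eq_sym -subr_eq0 -sumrB; apply/eqP.
under eq_bigr => y _ do rewrite -mulrBr (Ricd_sub_Ricd_on (vx_sub y)).
transitivity (- \sum_y \sum_x \sum_z F x y z); last first.
  by rewrite exchange_big /= sumr_cycle_eq0 ?oppr0.
rewrite -sumrN; apply: eq_bigr => y _; rewrite mulrN; congr (- _).
rewrite big_distrr big_mkcond; apply: eq_bigr => x _ /=.
case: ifP => xy; last by rewrite big1 // => z _; rewrite /F xy.
rewrite big_distrr big_mkcond; apply: eq_bigr => z _ /=.
rewrite /F xy eq_sym; case: ifP => //= yz.
have [xz|xz] := eqVneq x.1 z.1; last by ring.
have zE : (vx z <= E (lam x.1))%MS by rewrite xz vx_sub.
rewrite (alphaLC_ip_eigsp0 _ (vx_sub x) (vx_sub y) zE) ?mul0r ?mulr0 //.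
by rewrite lam_neq // eq_sym.
Qed.

End EigenDecomposition.

End CodazziTensor.

End Homogeneous.

Lemma increasing_inj (R : numDomainType) r (lam : 'I_r -> R) :
  (forall i j : 'I_r, (i < j)%N -> lam i < lam j) -> injective lam.
Proof.
move=> lam_lt i j lamij; case: (ltngtP i j) => [/lam_lt|/lam_lt|/val_inj //];
  by rewrite lamij ltxx.
Qed.

Lemma increasing_extremal (R : realDomainType) r (lam : 'I_r -> R) (j : 'I_r) :
  (forall i k : 'I_r, (i < k)%N -> lam i < lam k) ->
  nat_of_ord j = 0%N \/ nat_of_ord j = r.-1 ->
  forall k l, k != j -> l != j -> 0 < (lam k - lam j) * (lam l - lam j).
Proof.
move=> lam_lt [j0|jr] k l kj lj.
  have gt m : m != j -> lam j < lam m.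
    move=> mj; apply: lam_lt; rewrite j0 lt0n.
    by apply: contra mj => /eqP m0; apply/eqP/val_inj; rewrite /= m0.
  by have := gt _ kj; have := gt _ lj; nra.
have lt m : m != j -> lam m < lam j.
  move=> mj; apply: lam_lt; rewrite ltn_neqAle val_eqE mj /= jr -ltnS prednK //.
  exact: leq_ltn_trans (ltn_ord j).
by have := lt _ kj; have := lt _ lj; nra.
Qed.

Theorem proposition3p3 (R : realFieldType) (n : nat)
  (Q : 'M[R]_n) (c : 'I_n -> 'I_n -> 'rV[R]_n) (Bm : 'M[R]_n)
  (r : nat) (lam : 'I_r -> R) :
  (* Ad(H)-invariant inner product on m: symmetric positive definite *)
  Q^T = Q ->
  (forall X : 'rV[R]_n, X != 0 -> 0 < ipQ Q X X) ->
  (* [.,.]_m is skew-symmetric *)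
  (forall a b, c a b = - c b a) ->
  (* A symmetric, Codazzi *)
  Bm^T = Bm ->
  codazzi Q c Bm ->
  (* eigenvalues lambda_1 < ... < lambda_r and m = m_1 + ... + m_r *)
  (forall i j : 'I_r, (i < j)%N -> lam i < lam j) ->
  (forall i : 'I_r, eigenvalue (Bm *m invmx Q) (lam i)) ->
  (\sum_(i < r) eigsp Q Bm (lam i) :=: 1%:M)%MS ->
  (* (i) *)
  (forall j : 'I_r, (nat_of_ord j = 0%N \/ nat_of_ord j = r.-1) ->
     forall Y : 'rV[R]_n, (Y <= eigsp Q Bm (lam j))%MS ->
       Ricd Q c Y Y <= Ricd_on Q c (eigsp Q Bm (lam j)) Y Y)
  /\
  (* (ii) *)
  \sum_(i < r) sd_on Q c (eigsp Q Bm (lam i)) = sd Q c.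
Proof.
(* The eigenspaces are not required to be nonzero. *)
move=> Q_sym Q_posdef c_skew Bm_sym A_codazzi lam_lt _ eigsp_sum.
pose basis i := orthobasis_exists Q_sym Q_posdef (eigsp Q Bm (lam i)).
pose v i := sval (basis i).
have v_basis i : orthobasis Q (eigsp Q Bm (lam i)) (v i) := svalP (basis i).
have lam_inj := increasing_inj lam_lt.
split=> [j j_ext Y|].
  apply: (Ricd_le_Ricd_on Q_sym Q_posdef c_skew Bm_sym A_codazzi lam_inj eigsp_sum
    v_basis).
  exact: increasing_extremal lam_lt j_ext.
exact: (sum_sd_on Q_sym Q_posdef c_skew Bm_sym A_codazzi lam_inj eigsp_sum v_basis).
Qed.
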